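(* A countably based topological space is scattered if and only if it is a countable quasi-Polish space satisfying the $T_D$-axiom.
   Context: A point $x$ is isolated if $\{x\}$ is open, otherwise a limit point. Derived sets: $X^{(0)}=X$, $X^{(\alpha+1)}$ is the set of points of $X^{(\alpha)}$ that are limit points of the subspace $X^{(\alpha)}$, and $X^{(\alpha)}=\bigcap_{\beta<\alpha}X^{(\beta)}$ for limit $\alpha$; $|X|_{CB}$ is the least $\alpha$ with $X^{(\alpha)}=X^{(\alpha+1)}$. $X$ is scattered if $X^{(|X|_{CB})}=\emptyset$ (equivalently every non-empty subspace has an isolated point). A set is locally closed if it is the intersection of an open and a closed set; $X$ satisfies $T_D$ if every singleton $\{x\}$ is locally closed. A quasi-metric on a set $X$ is a function $d\colon X\times X\to[0,\infty)$ with $x=y$ iff $d(x,y)=d(y,x)=0$ and $d(x,z)\le d(x,y)+d(y,z)$; it induces the topology generated by $B_d(x,\varepsilon)=\{y\mid d(x,y)<\varepsilon\}$; $\widehat d(x,y)=\max\{d(x,y),d(y,x)\}$. $(x_n)$ is Cauchy if for every $\varepsilon>0$ there is $n_0$ with $d(x_n,x_m)<\varepsilon$ for all $m\ge n\ge n_0$; $d$ is complete if every Cauchy sequence converges in the topology of $\widehat d$. A space is quasi-Polish if it is countably based and its topology is induced by a complete quasi-metric. *)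

From HB Require Import structures.
From mathcomp Require Import all_boot all_order all_algebra.
From mathcomp Require Import all_classical all_reals topology.
From mathcomp Require Import Rstruct Rstruct_topology.
From Stdlib Require Import Rdefinitions.
Set Implicit Arguments. Unset Strict Implicit. Unset Printing Implicit Defensive.
Import Order.TTheory GRing.Theory Num.Theory.
Local Open Scope classical_set_scope.
Local Open Scope ring_scope.

Section Defs.
Variable T : topologicalType.

Definition derived (A : set T) : set T :=
  [set x | A x /\ forall U : set T, open U -> U x -> exists y, U y /\ A y /\ y <> x].

(* The Cantor-Bendixson stages X^(alpha), alpha ordinal: generated from X by
   the successor step (derived set) and by intersections of families of stages
   (limit step; the empty family gives X = X^(0)). *)
Inductive CB_stage : set T -> Prop :=
  | CB_succ A : CB_stage A -> CB_stage (derived A)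
  | CB_inter (F : set (set T)) : (forall B, F B -> CB_stage B) -> CB_stage (\bigcap_(B in F) B).

(* X^(|X|_CB): the (smallest) stage at which the sequence stabilises *)
Definition CB_kernel : set T := \bigcap_(B in CB_stage) B.

Definition scattered : Prop := CB_kernel = set0.

Definition locally_closed (A : set T) : Prop :=
  exists U C : set T, open U /\ closed C /\ A = U `&` C.

Definition T_D : Prop := forall x : T, locally_closed [set x].

Definition quasi_metric (d : T -> T -> R) : Prop :=
  (forall x y, 0 <= d x y) /\
  (forall x y, x = y <-> (d x y = 0 /\ d y x = 0)) /\
  (forall x y z, d x z <= d x y + d y z).

Definition qball (d : T -> T -> R) (x : T) (e : R) : set T := [set y | d x y < e].

Definition induces_topology (d : T -> T -> R) : Prop :=
  forall U : set T, open U <-> (forall x, U x -> exists2 e : R, 0 < e & qball d x e `<=` U).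

Definition dhat (d : T -> T -> R) (x y : T) : R := Num.max (d x y) (d y x).

Definition qm_cauchy (d : T -> T -> R) (u : nat -> T) : Prop :=
  forall e : R, 0 < e -> exists n0 : nat, forall n m : nat,
    leq n0 n -> leq n m -> d (u n) (u m) < e.

Definition dhat_converges (d : T -> T -> R) (u : nat -> T) : Prop :=
  exists x : T, forall e : R, 0 < e -> exists N : nat, forall n : nat,
    leq N n -> dhat d x (u n) < e.

Definition qm_complete (d : T -> T -> R) : Prop :=
  forall u : nat -> T, qm_cauchy d u -> dhat_converges d u.

Definition quasi_Polish : Prop :=
  @second_countable T /\
  exists d : T -> T -> R, quasi_metric d /\ induces_topology d /\ qm_complete d.

End Defs.

(** The Cantor-Bendixson stages form a chain: for stages [A] and [B], either
    [B] is contained in [A] or [A] is contained in the derived set of [B].  Hence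
    every point [x] of a scattered space has a least stage containing it, in
    which it is isolated, and the relation "[x = y] or [x] has strictly larger
    rank than [y]" is a partial order satisfying the ascending chain condition
    whose principal upsets are neighbourhoods.  Such an order, together with an
    enumerated countable basis, yields a quasi-metric: the distance from [x] to
    [y] is [1] unless [x] lies below [y], and otherwise [1/(j+1)] for the least
    index [j] of a basic set containing [x] but not [y].  Cauchy sequences for
    it are eventually ascending, hence eventually constant, so it is complete;
    the same order shows that the basis separates points, so the space is
    countable.  Scattered spaces are also T_D, since a point which is not
    isolated in its closure makes that closure perfect.

    Conversely, in a countable T_D space with a complete quasi-metric a
    non-empty closed perfect set [P] cannot exist: a Baire-type argument builds
    nested balls centred in [P] whose [n]-th ball avoids the [n]-th point of
    the space (T_D makes a punctured neighbourhood open), and the limit of the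
    centres lies in [P] but in none of the points.  Applied to the closure of the
    Cantor-Bendixson kernel, this shows that the kernel is empty. *)

From mathcomp Require Import all_boot all_order all_algebra all_classical all_reals.
From mathcomp Require Import topology Rstruct lra zify.
Import Order.TTheory GRing.Theory Num.Theory.
Set Implicit Arguments. Unset Strict Implicit. Unset Printing Implicit Defensive.
Local Open Scope classical_set_scope.
Local Open Scope ring_scope.
Local Notation R := Rdefinitions.R.

Section CantorBendixson.
Variable T : topologicalType.
Implicit Types A B P : set T.

Lemma derived_sub A : derived A `<=` A.
Proof. by move=> x []. Qed.

Lemma derived_mono A B : A `<=` B -> derived A `<=` derived B.
Proof.
move=> AB x [Ax H]; split; first exact: AB.
move=> U oU Ux; have [y [Uy [Ay yx]]] := H U oU Ux.
by exists y; split => //; split => //; apply: AB.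
Qed.

(* Every stage has this property (CB_stage_gap); it is the strengthened
   induction hypothesis that makes the stages a chain. *)
Definition CB_gap A :=
  forall B, CB_stage B -> A `<=` B -> A <> B -> A `<=` derived B.

Lemma CB_gap_comparable A : CB_gap A ->
  forall B, CB_stage B -> A `<=` B \/ B `<=` derived A.
Proof.
move=> gA B; elim => [B' sB' IH | F sF IH].
- case: IH => [AB'|B'A]; last by right=> z /derived_sub /B'A.
  by case: (pselect (A = B')) => [<-|neq]; [right | left; exact: gA].
- case: (pselect (forall B, F B -> A `<=` B)) => [AF|].
    by left => z Az C FC; exact: AF C FC z Az.
  move=> /existsNP [C /not_implyP [FC nAC]].
  by case: (IH C FC) => // CA; right => z zF; exact: CA _ (zF C FC).
Qed.

Lemma CB_stage_gap A : CB_stage A -> CB_gap A.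
Proof.
elim => [A' sA' gA' | F sF gF].
- move=> B sB A'B neq; case: (CB_gap_comparable gA' sB) => [A'B'|BA'].
  + case: (pselect (A' = B)) => [<-//|ne].
    by move=> z /derived_sub /(gA' B sB A'B' ne).
  + by exfalso; apply: neq; apply/seteqP; split.
- move=> B sB FB neq.
  have [C [FC nBC]] : exists C, F C /\ ~ (B `<=` C).
    apply: contrapT => h; apply: neq; apply/seteqP; split => // z Bz C FC.
    by apply: contrapT => nCz; apply: h; exists C; split => // BC; exact/nCz/BC.
  case: (CB_gap_comparable (gF C FC) sB) => [CB|BC]; last first.
    by exfalso; apply: nBC => z /BC /derived_sub.
  have CneB : C <> B by move=> CB'; apply: nBC; rewrite CB'.
  by move=> z zF; apply: (gF C FC B sB CB CneB); exact: zF C FC.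
Qed.

Lemma CB_stage_comparable A B : CB_stage A -> CB_stage B ->
  B `<=` A \/ A `<=` derived B.
Proof. by move=> sA sB; exact: CB_gap_comparable (CB_stage_gap sB) _ sA. Qed.

Definition least_stage A := \bigcap_(B in [set B | CB_stage B /\ A `<=` B]) B.

Lemma least_stage_CB A : CB_stage (least_stage A).
Proof. by apply: CB_inter => B []. Qed.

Lemma sub_least_stage A : A `<=` least_stage A.
Proof. by move=> x Ax B [_]; apply. Qed.

Lemma least_stage1 x : least_stage [set x] x.
Proof. exact: sub_least_stage. Qed.

Lemma least_stage_min A B : CB_stage B -> A `<=` B -> least_stage A `<=` B.
Proof. by move=> sB AB x; apply. Qed.

Lemma least_stage_perfect A : A `<=` derived (least_stage A) ->
  least_stage A `<=` derived (least_stage A).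
Proof. by move=> h; apply: least_stage_min h; apply: CB_succ; exact: least_stage_CB. Qed.

Lemma perfect_sub_CB_stage P : P `<=` derived P -> forall A, CB_stage A -> P `<=` A.
Proof.
move=> PD A; elim => [B _ PB | F _ PF].
- by move=> z /PD; apply: derived_mono.
- by move=> z Pz B FB; exact: PF B FB z Pz.
Qed.

Lemma scattered_perfect_empty P : scattered T -> P `<=` derived P -> P = set0.
Proof.
move=> sc PD; apply/seteqP; split => // z Pz.
have : @CB_kernel T z by move=> B sB; exact: perfect_sub_CB_stage PD B sB z Pz.
by rewrite sc.
Qed.

Lemma CB_kernel_perfect : @CB_kernel T `<=` derived (@CB_kernel T).
Proof. by move=> z Kz; apply: Kz; apply: CB_succ; apply: CB_inter. Qed.

Lemma closure_perfect P : P `<=` derived P -> closure P `<=` derived (closure P).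
Proof.
move=> PD y Py; split => // U oU Uy.
have [w [Pw Uw]] : P `&` U !=set0 by apply: Py; apply: open_nbhs_nbhs.
have [wy|ne] := pselect (w = y); last first.
  by exists w; split => //; split => //; exact: subset_closure.
have [_ hw] := PD w Pw; have [z [Uz [Pz zw]]] := hw U oU Uw.
by exists z; split => //; split; [exact: subset_closure | rewrite -wy].
Qed.

Lemma isolated_nbhs A x : A x -> ~ derived A x ->
  exists2 U, open U & U x /\ U `&` A `<=` [set x].
Proof.
move=> Ax ndx; apply: contrapT => noU; apply: ndx; split => // U oU Ux.
apply: contrapT => noy; apply: noU; exists U => //; split => // y [Uy Ay].
by apply: contrapT => yx; apply: noy; exists y.
Qed.

End CantorBendixson.
Arguments least_stage1 {T} x.

Section ScatteredSpace.
Variable T : topologicalType.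
Hypothesis sc : scattered T.

Lemma least_stage_isolated (x : T) : ~ derived (least_stage [set x]) x.
Proof.
move=> dx; have /(scattered_perfect_empty sc) L0 :
    least_stage [set x] `<=` derived (least_stage [set x]).
  by apply: least_stage_perfect => _ ->.
by have := least_stage1 x; rewrite L0.
Qed.

Definition rank_above (x y : T) : Prop :=
  x = y \/ least_stage [set x] `<=` derived (least_stage [set y]).

Lemma rank_above_refl x : rank_above x x.
Proof. by left. Qed.

Lemma rank_above_trans x y z : rank_above x y -> rank_above y z -> rank_above x z.
Proof.
case=> [->//|xy] [<-|yz]; first by right.
by right => w /xy /derived_sub /yz.
Qed.

Lemma rank_above_antisym x y : rank_above x y -> rank_above y x -> x = y.
Proof.
case=> [//|xy] [//|yx]; exfalso; apply: (least_stage_isolated (x := x)).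
exact: yx _ (derived_sub (xy _ (least_stage1 x))).
Qed.

Lemma rank_above_nbhs x : nbhs x [set y | rank_above x y].
Proof.
have [U oU [Ux Ux1]] := isolated_nbhs (least_stage1 x) (@least_stage_isolated x).
rewrite nbhsE; exists U => // y Uy /=.
have [yx|] := CB_stage_comparable (least_stage_CB [set x]) (least_stage_CB [set y]).
  by left; apply/esym/Ux1; split => //; exact: yx _ (least_stage1 y).
by right.
Qed.

Lemma rank_above_stabilizes (u : nat -> T) :
  (forall n, rank_above (u n) (u n.+1)) -> exists n, forall m, (n <= m)%N -> u m = u n.
Proof.
move=> step; apply: contrapT => moves.
have up n m : (n <= m)%N -> rank_above (u n) (u m).
  by apply: homo_leq; [exact: rank_above_refl | move=> ????; exact: rank_above_trans |].
pose Q := least_stage (range u).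
suff /(scattered_perfect_empty sc) Q0 : Q `<=` derived Q.
  by have := @sub_least_stage _ (range u) _ (imageT u 0%N); rewrite -/Q Q0.
apply: least_stage_perfect => _ [n _ <-].
have [m nm unm] : exists2 m, (n <= m)%N & u m <> u n.
  apply: contrapT => h; apply: moves; exists n => m nm.
  by apply: contrapT => ne; apply: h; exists m.
case: (up n m nm) => [/esym//|nm_rank].
have mQ : least_stage [set u m] `<=` Q.
  apply: least_stage_min; first exact: least_stage_CB.
  by move=> _ ->; apply: sub_least_stage; exact: imageT.
exact: derived_mono mQ _ (nm_rank _ (least_stage1 (u n))).
Qed.

Lemma scattered_T_D : T_D T.
Proof.
move=> x; pose C := closure [set x]; have Cx : C x by exact: subset_closure.
have ndx : ~ derived C x.
  move=> dx; have /(scattered_perfect_empty sc) C0 : C `<=` derived C.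
    move=> y Cy; case: (pselect (y = x)) => [->//|yx]; split => // V oV Vy.
    have [_ [-> Vx]] : [set x] `&` V !=set0 by apply: Cy; apply: open_nbhs_nbhs.
    by exists x; split => //; split => // /esym.
  by move: Cx; rewrite C0.
have [U oU [Ux Ux1]] := isolated_nbhs Cx ndx.
exists U, C; split => //; split; first exact: closed_closure.
by apply/seteqP; split => [_ ->|//]; split.
Qed.

End ScatteredSpace.

Definition weight (j : nat) : R := (j.+1%:R)^-1.

Lemma weight_gt0 j : 0 < weight j.
Proof. by rewrite /weight invr_gt0 ltr0n. Qed.

Lemma weight_le1 j : weight j <= 1.
Proof. by rewrite /weight invr_le1 ?unitfE ?pnatr_eq0 ?ltr0n // ler1n. Qed.

Lemma weight_anti i j : (i <= j)%N -> weight j <= weight i.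
Proof. by move=> ij; rewrite /weight lef_pV2 ?posrE ?ltr0n // ler_nat ltnS. Qed.

Lemma weight_small (e : R) : 0 < e -> exists K, weight K < e.
Proof.
move=> e0; have /archi_boundP : 0 <= e^-1 by rewrite invr_ge0 ltW.
set K := Num.bound _ => hK; exists K.
rewrite /weight -[e]invrK ltf_pV2 ?posrE ?ltr0n ?invr_gt0 //.
by apply: (lt_le_trans hK); rewrite ler_nat.
Qed.

Section OrderQuasiMetric.
Variable T : topologicalType.
Variable prec : T -> T -> Prop.
Hypothesis prec_refl : forall x, prec x x.
Hypothesis prec_trans : forall x y z, prec x y -> prec y z -> prec x z.
Hypothesis prec_antisym : forall x y, prec x y -> prec y x -> x = y.
Hypothesis prec_nbhs : forall x, nbhs x [set y | prec x y].
Variables (Bs : set (set T)) (f : set T -> nat).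
Hypothesis finj : {in Bs &, injective f}.
Hypothesis hB : basis Bs.

Lemma countable_setT : countable [set: T].
Proof.
have basic_upset x : exists U, Bs U /\ U x /\ U `<=` [set y | prec x y].
  by have [_ hb] := hB; have [U [BU Ux] sU] := hb x _ (prec_nbhs x); exists U.
have [U hU] := choice basic_upset.
apply/countable_injP; exists (fun x => f (U x)) => x y _ _ fxy.
have [BUx [Ux sUx]] := hU x; have [BUy [Uy sUy]] := hU y.
have Uxy : U x = U y by apply: finj; rewrite ?inE.
by apply: prec_antisym; [apply: sUx; rewrite Uxy | apply: sUy; rewrite -Uxy].
Qed.

Definition sep_index (x y : T) (j : nat) : Prop :=
  exists U, Bs U /\ f U = j /\ U x /\ ~ U y.

Lemma sep_index_exb x y : (exists j, sep_index x y j) -> exists j, `[< sep_index x y j >].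
Proof. by move=> [j h]; exists j; apply/asboolP. Qed.

Definition sep_dist (x y : T) : R :=
  match pselect (exists j, sep_index x y j) with
  | left h => weight (ex_minn (sep_index_exb h))
  | right _ => 0
  end.

Lemma sep_distP x y : (sep_dist x y = 0 /\ forall j, ~ sep_index x y j) \/
  exists m, [/\ sep_index x y m, forall j, sep_index x y j -> (m <= j)%N
             & sep_dist x y = weight m].
Proof.
rewrite /sep_dist; case: pselect => [h|h]; last by left; split => // j lj; apply: h; exists j.
right; case: ex_minnP => m /asboolP Pm Hm; exists m; split => // j lj.
by apply: Hm; apply/asboolP.
Qed.

Lemma sep_dist_ge x y j : sep_index x y j -> weight j <= sep_dist x y.
Proof.
move=> lj; case: (sep_distP x y) => [[_ h]|[m [_ hm ->]]]; first by case: (h j lj).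
by apply: weight_anti; exact: hm.
Qed.

Lemma sep_dist_ge0 x y : 0 <= sep_dist x y.
Proof. by case: (sep_distP x y) => [[-> _]|[m [_ _ ->]]] //; exact/ltW/weight_gt0. Qed.

Lemma sep_dist_le1 x y : sep_dist x y <= 1.
Proof.
by case: (sep_distP x y) => [[-> _]|[m [_ _ ->]]]; [exact: ler01 | exact: weight_le1].
Qed.

Definition qdist (x y : T) : R := if pselect (prec x y) then sep_dist x y else 1.

Lemma qdist_prec x y : prec x y -> qdist x y = sep_dist x y.
Proof. by rewrite /qdist; case: pselect. Qed.

Lemma qdist_nprec x y : ~ prec x y -> qdist x y = 1.
Proof. by rewrite /qdist; case: pselect. Qed.

Lemma qdist_ge0 x y : 0 <= qdist x y.
Proof. by rewrite /qdist; case: pselect => ?; [exact: sep_dist_ge0 | exact: ler01]. Qed.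

Lemma qdist_le1 x y : qdist x y <= 1.
Proof. by rewrite /qdist; case: pselect => ?; [exact: sep_dist_le1 | exact: lexx]. Qed.

Lemma qdist_refl x : qdist x x = 0.
Proof.
rewrite qdist_prec //.
by case: (sep_distP x x) => [[-> _]|[m [[U [_ [_ [Ux nUx]]]] _ _]]].
Qed.

Lemma qdist_lt1 x y : qdist x y < 1 -> prec x y.
Proof. by move=> h; apply: contrapT => nxy; move: h; rewrite qdist_nprec // ltxx. Qed.

Lemma qdist_triangle x y z : qdist x z <= qdist x y + qdist y z.
Proof.
case: (pselect (prec x y)) => hxy; last first.
  by rewrite (qdist_nprec hxy); have := qdist_le1 x z; have := qdist_ge0 y z; lra.
case: (pselect (prec y z)) => hyz; last first.
  by rewrite (qdist_nprec hyz); have := qdist_le1 x z; have := qdist_ge0 x y; lra.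
rewrite !qdist_prec //; last exact: prec_trans hxy hyz.
have := sep_dist_ge0 x y; have := sep_dist_ge0 y z.
case: (sep_distP x z) => [[-> _]|[m [[U [BU [fU [Ux nUz]]]] _ ->]]]; first lra.
case: (pselect (U y)) => Uy.
- have : weight m <= sep_dist y z by apply: sep_dist_ge; exists U.
  lra.
- have : weight m <= sep_dist x y by apply: sep_dist_ge; exists U.
  lra.
Qed.

Lemma qdist_quasi_metric : quasi_metric qdist.
Proof.
split; first exact: qdist_ge0.
split; last exact: qdist_triangle.
move=> x y; split; first by move=> <-; rewrite qdist_refl.
by move=> [h1 h2]; apply: prec_antisym; apply: qdist_lt1; rewrite ?h1 ?h2 ltr01.
Qed.

Lemma not_sep_index_nbhs x j : nbhs x [set z | ~ sep_index x z j].
Proof.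
case: (pselect (exists V, Bs V /\ f V = j /\ V x)) => [[V [BV [fV Vx]]]|noV].
- have oV : open V by have [h _] := hB; exact: h.
  apply: filterS (open_nbhs_nbhs (conj oV Vx)) => z Vz [U [BU [fU [Ux nUz]]]].
  by apply: nUz; rewrite (finj _ _ (etrans fU (esym fV))) ?inE.
- apply: filterS (@filterT _ (nbhs x) _) => z _ [U [BU [fU [Ux _]]]].
  by apply: noV; exists U.
Qed.

Lemma qball_nbhs x e : 0 < e -> nbhs x (qball qdist x e).
Proof.
move=> e0; have [K hK] := weight_small e0.
have noK : nbhs x [set z | forall j, (j <= K)%N -> ~ sep_index x z j].
  elim: K {hK} => [|K IH].
    by apply: filterS (not_sep_index_nbhs x 0) => z h j; rewrite leqn0 => /eqP ->.
  apply: filterS (filterI IH (not_sep_index_nbhs x K.+1)) => z [h1 h2] j.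
  by rewrite leq_eqVlt ltnS => /orP [/eqP ->|jK]; [exact: h2 | exact: h1].
apply: filterS (filterI (prec_nbhs x) noK) => z [xz hz]; rewrite /qball /= qdist_prec //.
case: (sep_distP x z) => [[-> _]|[m [xzm _ ->]]] //.
have Km : (K <= m)%N by rewrite leqNgt; apply/negP => /ltnW mK; exact: hz m mK xzm.
exact: le_lt_trans (weight_anti Km) hK.
Qed.

Lemma qdist_ball_sub_open U x : open U -> U x -> exists2 e, 0 < e & qball qdist x e `<=` U.
Proof.
move=> oU Ux; have [_ hb] := hB.
have [V [BV Vx] VU] := hb x U (open_nbhs_nbhs (conj oU Ux)).
exists (weight (f V)); first exact: weight_gt0.
move=> y; rewrite /qball /= => dxy; apply: VU; apply: contrapT => nVy.
case: (pselect (prec x y)) => hxy; last first.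
  by move: dxy (weight_le1 (f V)); rewrite qdist_nprec //; lra.
have : weight (f V) <= sep_dist x y by apply: sep_dist_ge; exists V.
by move: dxy; rewrite qdist_prec //; lra.
Qed.

Lemma qdist_induces_topology : induces_topology qdist.
Proof.
move=> U; split => [oU x|balls]; first exact: qdist_ball_sub_open.
by rewrite openE => x /balls [e e0 sub]; apply: filterS sub (qball_nbhs x e0).
Qed.

Hypothesis prec_stabilizes : forall u : nat -> T,
  (forall n, prec (u n) (u n.+1)) -> exists n, forall m, (n <= m)%N -> u m = u n.

Lemma qdist_complete : qm_complete qdist.
Proof.
move=> u cu; have [N hN] := cu 1 ltr01.
have [k hk] : exists k, forall m, (k <= m)%N -> u (N + m)%N = u (N + k)%N.
  by apply: prec_stabilizes => n; apply/qdist_lt1/hN; rewrite ?leq_addr ?addnS.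
exists (u (N + k)%N) => e e0; exists (N + k)%N => m Nkm.
have -> : u m = u (N + (m - N))%N by rewrite subnKC //; lia.
by rewrite hk; [rewrite /dhat qdist_refl maxxx | lia].
Qed.

End OrderQuasiMetric.

Lemma scattered_countable_quasi_Polish_T_D (T : topologicalType) :
  @second_countable T -> scattered T -> countable [set: T] /\ quasi_Polish T /\ T_D T.
Proof.
move=> T2 sc; have [Bs cBs hB] := T2; have /countable_injP [f finj] := cBs.
have antisym := @rank_above_antisym T sc; have nbhs_up := @rank_above_nbhs T sc.
split; first exact: (countable_setT antisym nbhs_up finj hB).
split; last exact: scattered_T_D.
split => //; exists (qdist (@rank_above T) Bs f); split.
  exact: (qdist_quasi_metric (@rank_above_refl T) (@rank_above_trans T) antisym).
split; first exact: (qdist_induces_topology nbhs_up finj hB).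
exact: (qdist_complete (@rank_above_refl T) (@rank_above_stabilizes T sc)).
Qed.

Lemma dependent_choice_nat (X : Type) (Q : X -> Prop) (S : nat -> X -> X -> Prop)
    (x0 : X) :
  Q x0 -> (forall n x, Q x -> exists y, Q y /\ S n x y) ->
  exists s : nat -> X, forall n, Q (s n) /\ S n (s n) (s n.+1).
Proof.
move=> Qx0 step.
have [h hP] : {h : nat * X -> X & forall p, Q p.2 -> Q (h p) /\ S p.1 p.2 (h p)}.
  apply: (@choice _ _ (fun p y => Q p.2 -> Q y /\ S p.1 p.2 y)) => -[n x] /=.
  by case: (pselect (Q x)) => [/(step n) [y hy]|nQ]; [exists y | exists x].
pose s := fix s n := if n is k.+1 then h (k, s k) else x0.
have Qs n : Q (s n) by elim: n => // n Qn; exact: (hP (n, s n) Qn).1.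
by exists s => n; split; [exact: Qs | exact: (hP (n, s n) (Qs n)).2].
Qed.

Section Baire.
Variable T : topologicalType.
Variable d : T -> T -> R.
Hypothesis qm : quasi_metric d.
Hypothesis ind : induces_topology d.
Hypothesis cpl : qm_complete d.
Hypothesis td : T_D T.
Variable g : T -> nat.
Hypothesis ginj : injective g.

Lemma qm_refl x : d x x = 0.
Proof. by have [_ [h _]] := qm; have [/(_ erefl) []] := h x x. Qed.

Lemma qm_triangle x y z : d x z <= d x y + d y z.
Proof. by have [_ [_ h]] := qm; exact: h. Qed.

Lemma qball_open x e : open (qball d x e).
Proof.
apply/ind => y; rewrite /qball /= => hy.
exists (e - d x y); first by rewrite subr_gt0.
by move=> z; rewrite /qball /= => hz; have := qm_triangle x y z; lra.
Qed.

Lemma qball_sub_open U x : open U -> U x -> exists2 e, 0 < e & qball d x e `<=` U.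
Proof. by move=> oU; have [h _] := ind U; exact: h oU x. Qed.

Lemma T_D_punctured (x : T) : exists U : set T, [/\ open U, U x & open (U `\` [set x])].
Proof.
have [U [C [oU [cC UC]]]] := td x; have [Ux _] : (U `&` C) x by rewrite -UC.
exists U; split => //; suff -> : U `\` [set x] = U `&` ~` C by apply: openI; rewrite ?openC.
rewrite UC; apply/seteqP; split => z [Uz nz]; split => //.
- by move=> Cz; apply: nz.
- by move=> [_ /nz].
Qed.

Lemma closed_dhat_limit (C : set T) (u : nat -> T) x : closed C -> (forall n, C (u n)) ->
  (forall e, 0 < e -> exists N, forall n, (N <= n)%N -> dhat d x (u n) < e) -> C x.
Proof.
move=> cC Cu ux; apply: cC => B; rewrite nbhsE => -[V [oV Vx] VB].
have [r r0 sub] := qball_sub_open oV Vx; have [N hN] := ux r r0.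
exists (u N); split => //; apply/VB/sub; rewrite /qball /=.
by apply: le_lt_trans (hN N (leqnn N)); rewrite /dhat le_max lexx.
Qed.

Lemma nested_qball_dist (c : nat -> T) (r : nat -> R) : (forall n, 0 < r n) ->
  (forall n, qball d (c n.+1) (r n.+1) `<=` qball d (c n) (r n)) ->
  forall n m, (n <= m)%N -> d (c n) (c m) < r n.
Proof.
move=> r0 nest n m nm.
suff : qball d (c m) (r m) `<=` qball d (c n) (r n) by apply; rewrite /qball /= qm_refl.
exact: (@homo_leq _ (fun k => qball d (c k) (r k)) (fun A B => B `<=` A)
  (@subset_refl _) (fun _ _ _ yx zy => subset_trans zy yx) nest _ _ nm).
Qed.

Variable P : set T.
Hypothesis PD : P `<=` derived P.

Lemma open_avoiding n y e : P y -> 0 < e -> exists V,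
  [/\ open V, exists z, V z /\ P z & V `<=` qball d y e `\` [set a | g a = n /\ P a]].
Proof.
move=> Py e0; pose W := qball d y e.
have Wy : W y by rewrite /W /qball /= qm_refl.
case: (pselect (exists a, [/\ g a = n, P a & W a])) => [[a [ga Pa Wa]]|noa]; last first.
  exists W; split; [exact: qball_open | by exists y | move=> z Wz; split => // -[gz Pz]].
  by apply: noa; exists z.
have [U [oU Ua oUa]] := T_D_punctured a.
have [z [[Wz Uz] [Pz za]]] := (PD Pa).2 _ (openI (qball_open y e) oU) (conj Wa Ua).
exists (W `&` (U `\` [set a])); split; first exact: openI (qball_open y e) oUa.
  by exists z.
by move=> b [Wb [_ ba]]; split => // -[gb _]; apply: ba; apply: ginj; rewrite gb ga.
Qed.

(* The radius [2 * e'] leaves room for one triangle inequality at the limit. *)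
Definition shrink_step n (y : T) (e : R) (z : T) (e' : R) : Prop :=
  [/\ P z, 0 < e', e' <= e, e' <= weight n &
      qball d z (2 * e') `<=` qball d y e `\` [set a | g a = n /\ P a]].

Lemma shrink_step_exists n y e : P y -> 0 < e -> exists z e', shrink_step n y e z e'.
Proof.
move=> Py e0; have [V [oV [z [Vz Pz]] Vsub]] := open_avoiding n Py e0.
have [r r0 zrV] := qball_sub_open oV Vz.
pose e' := Num.min (r / 2) (Num.min e (weight n)).
have e'r : e' <= r / 2 by rewrite ge_min lexx.
have e'0 : 0 < e' by rewrite !lt_min e0 weight_gt0 divr_gt0.
exists z, e'; split; rewrite ?ge_min ?lexx ?orbT //.
move=> w hw; apply: Vsub; apply: zrV; move: hw; rewrite /qball /=; lra.
Qed.

Lemma perfect_closed_empty : closed P -> P = set0.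
Proof.
move=> Pcl; apply/seteqP; split => // y0 Py0.
have step n (p : T * R) : P p.1 /\ 0 < p.2 ->
    exists q : T * R, (P q.1 /\ 0 < q.2) /\ shrink_step n p.1 p.2 q.1 q.2.
  move=> [Pp p0]; have [z [e' [Pz e'0 ? ? ?]]] := shrink_step_exists n Pp p0.
  by exists (z, e').
have [s hs] := dependent_choice_nat (x0 := (y0, 1)) (conj Py0 ltr01) step.
pose c n := (s n).1; pose r n := (s n).2.
have r0 n : 0 < r n by case: (hs n) => -[].
have nest n : qball d (c n.+1) (r n.+1) `<=` qball d (c n) (r n).
  have [_ [_ _ _ _ sub]] := hs n; move=> w hw.
  suff [] : (qball d (c n) (r n) `\` [set a | g a = n /\ P a]) w by [].
  by apply: sub; move: hw (r0 n.+1); rewrite /qball /c /r /=; lra.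
have dist := nested_qball_dist r0 nest.
have r_anti n m : (n <= m)%N -> r m <= r n.
  apply: (@homo_leq _ r (fun a b => b <= a) (@lexx _ _) (fun _ _ _ yx zy => le_trans zy yx)).
  by move=> k; have [_ []] := hs k.
have cauchy : qm_cauchy d c.
  move=> e e0; have [K hK] := weight_small e0; exists K.+1 => n m Kn nm.
  have [_ [_ _ _ rK _]] := hs K.
  apply: lt_le_trans (dist n m nm) _; apply: le_trans (r_anti _ _ Kn) _.
  by move: rK hK; rewrite /r; lra.
have [x hx] := cpl cauchy.
have Px : P x := closed_dhat_limit Pcl (fun n => (hs n).1.1) hx.
pose k := (g x).+1; have [_ [_ _ _ _ sub]] := hs (g x).
have [N hN] := hx _ (r0 k); pose m := maxn N k.
have [_ []] : (qball d (c (g x)) (r (g x)) `\` [set a | g a = g x /\ P a]) x.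
  have hxm : d (c m) x < r k.
    by apply: le_lt_trans (hN m (leq_maxl N k)); rewrite /dhat le_max lexx orbT.
  apply: sub; move: (dist k m (leq_maxr N k)) hxm (qm_triangle (c k) (c m) x).
  by rewrite /qball /c /r /=; lra.
by split.
Qed.

End Baire.

Lemma scattered_of_countable_quasi_Polish_T_D (T : topologicalType) :
  countable [set: T] -> quasi_Polish T -> T_D T -> scattered T.
Proof.
move=> /countable_injP [g ginj] [_ [d [qm [ind cpl]]]] td.
have ginjT : injective g by move=> a b; apply: ginj; rewrite inE.
have K0 := perfect_closed_empty qm ind cpl td ginjT
  (closure_perfect (@CB_kernel_perfect T)) (@closed_closure T _).
by apply/seteqP; split => // x Kx; rewrite -K0; exact: subset_closure.
Qed.

Theorem theorem65 (T : topologicalType) :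
  @second_countable T ->
  (scattered T <-> (countable [set: T] /\ quasi_Polish T /\ T_D T)).
Proof.
move=> T2; split; first exact: scattered_countable_quasi_Polish_T_D.
by move=> [cT [qP tD]]; exact: scattered_of_countable_quasi_Polish_T_D.
Qed.
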